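(* Let $f\colon\mathbb{N}\to\mathbb{R}$ be a superlinear function with $f(r)\geq 1+3r$ for all $r\in\mathbb{N}$. Then every finite graph $G$ is a minor of a finite graph $\tilde G$ with growth $f_{\tilde G}(r)\leq f(r)$ for every positive integer $r$.
   Context: $\mathbb{N}$ is the set of positive integers. A function $f\colon\mathbb{N}\to\mathbb{R}$ is superlinear if $f(x)/x\to\infty$ as $x\to\infty$. The growth of a finite graph $G$ is the function $f_G\colon\mathbb{N}\to\mathbb{N}$ where $f_G(r)$ is the maximum of $|V(H)|$ over all subgraphs $H$ of $G$ of radius at most $r$. A graph $H$ is a minor of $G$ if $H$ is isomorphic to a graph obtained from a subgraph of $G$ by contracting edges. *)

From HB Require Import structures.
From mathcomp Require Import all_boot all_order all_algebra.
From mathcomp Require Import all_classical all_reals all_analysis.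
Set Implicit Arguments. Unset Strict Implicit. Unset Printing Implicit Defensive.
Import Order.TTheory GRing.Theory Num.Theory.

Definition simple_graph (T : finType) (e : rel T) : Prop :=
  symmetric e /\ irreflexive e.

Definition connected_in (T : finType) (e : rel T) (A : {set T}) : Prop :=
  forall u v, u \in A -> v \in A ->
    connect [rel x y | [&& x \in A, y \in A & e x y]] u v.

(* This is
   exactly "H is isomorphic to a graph obtained from a subgraph of G by
   contracting edges". *)
Definition minor_of (T : finType) (e : rel T) (T' : finType) (e' : rel T') : Prop :=
  exists phi : T -> {set T'},
    [/\ (forall x, phi x != finset.set0),
        (forall x y, x != y -> [disjoint phi x & phi y]),
        (forall x, connected_in e' (phi x)) &
        (forall x y, e x y -> exists u v, [/\ u \in phi x, v \in phi y & e' u v])].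

Definition is_subgraph (T : finType) (e : rel T) (S : {set T}) (F : {set T * T}) : bool :=
  [forall x, forall y, ((x, y) \in F) ==>
      [&& x \in S, y \in S, e x y & (y, x) \in F]].

Definition dist_le (T : finType) (F : {set T * T}) (r : nat) (c x : T) : bool :=
  [exists k : 'I_r.+1, exists t : k.-tuple T,
      path (fun a b => (a, b) \in F) c t && (last c t == x)].

Definition radius_le (T : finType) (S : {set T}) (F : {set T * T}) (r : nat) : bool :=
  [exists c in S, forall x in S, dist_le F r c x].

Definition growth (T : finType) (e : rel T) (r : nat) : nat :=
  \max_(S : {set T} | [exists F : {set T * T}, is_subgraph e S F && radius_le S F r]) #|S|.

Local Open Scope classical_set_scope.
Local Open Scope ring_scope.
Definition superlinear (R : realType) (f : nat -> R) : Prop :=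
  (fun x : nat => f x / x%:R) @ \oo --> +oo.

(* Replace every vertex u of G by a long path, its row, and every edge uv by
   two paths of length H hanging from the rows of u and v, whose free ends are
   joined; contracting each row together with the paths hanging from it gives
   back G.  The new graph has maximum degree 3, and its vertices of degree 3,
   the attachment points, are at distance at least H from one another: along an
   edge the distance to the nearest attachment point changes by at most one,
   and the nearest attachment point can only change where that distance reaches
   H.  So for 2r < H a ball of radius r contains at most one vertex of degree 3,
   hence at most 1 + 3r vertices, and 1 + 3r <= f(r).  For 2r >= H we use the
   trivial bound by the 3|G|^2 H vertices of the whole graph, which lies below
   f(r) once H is large, because f is superlinear. *)

From HB Require Import structures.
From mathcomp Require Import all_boot all_order all_algebra.
From mathcomp Require Import all_classical all_reals all_analysis.
From mathcomp Require Import fintype finset zify.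
Import Order.TTheory GRing.Theory Num.Theory.

Set Implicit Arguments.
Unset Strict Implicit.
Unset Printing Implicit Defensive.

Lemma leq_card_bigcup (I T : finType) (P : {pred I}) (F : I -> {set T}) :
  (#|\bigcup_(i in P) F i| <= \sum_(i in P) #|F i|)%N.
Proof.
elim/big_ind2 : _ => // [|A m B n leAm leBn]; first by rewrite cards0.
exact: leq_trans (leq_card_setU _ _) (leq_add leAm leBn).
Qed.

Section Balls.
Variables (V : finType) (E : rel V).

Definition degree x := #|[set y | E x y]|.

Variable c : V.

Fixpoint gball_rec d : {set V} :=
  if d is d'.+1 then gball_rec d' :|: [set y | [exists x in gball_rec d', E x y]]
  else [set c].
Fact gball_key : unit. Proof. by []. Qed.
Definition gball := locked_with gball_key gball_rec.

Lemma gball0 : gball 0 = [set c]. Proof. by rewrite [gball]unlock. Qed.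

Lemma gballS d y :
  (y \in gball d.+1) = (y \in gball d) || [exists x in gball d, E x y].
Proof. by rewrite [gball]unlock /= in_setU inE. Qed.

Lemma gball_subS d : gball d \subset gball d.+1.
Proof. by apply/subsetP => x xb; rewrite gballS xb. Qed.

Lemma sub_gball d d' : (d <= d')%N -> gball d \subset gball d'.
Proof.
elim: d' => [|d' IH]; first by rewrite leqn0 => /eqP ->.
rewrite leq_eqVlt => /orP [/eqP -> //|/IH le_dd'].
exact: subset_trans le_dd' (gball_subS d').
Qed.

Lemma center_gball d : c \in gball d.
Proof. by apply: (subsetP (sub_gball (leq0n d))); rewrite gball0 set11. Qed.

Lemma path_last_gball (F : {set V * V}) (t : seq V) :
  (forall a b, (a, b) \in F -> E a b) ->
  path (fun a b => (a, b) \in F) c t -> last c t \in gball (size t).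
Proof.
move=> FE; elim/last_ind: t => [|t y IH]; first by rewrite gball0 set11.
rewrite rcons_path last_rcons size_rcons => /andP [pt Fty].
by rewrite gballS; apply/orP; right; apply/existsP; exists (last c t); rewrite IH // FE.
Qed.

Definition exits d := (\sum_(x in gball d) #|[set y | E x y & y \notin gball d]|)%N.

Lemma card_layer_le_exits d : (#|gball d.+1 :\: gball d| <= exits d)%N.
Proof.
apply: leq_trans (leq_card_bigcup (mem (gball d)) _); apply: subset_leq_card.
apply/subsetP => y; rewrite in_setD gballS; case: (boolP (y \in gball d)) => //= yb.
by case/existsP => x /andP [xb Exy]; apply/bigcupP; exists x; rewrite // inE Exy yb.
Qed.

Lemma card_gballS_le d : (#|gball d.+1| <= #|gball d| + exits d)%N.
Proof.
have := card_layer_le_exits d; rewrite cardsDS ?gball_subS //.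
have := subset_leq_card (gball_subS d); lia.
Qed.

Hypothesis symE : symmetric E.

(* [x] is entered from a neighbour in [gball d], and that edge does not leave
   [gball d.+1]. *)
Lemma card_exits_new b d x :
  x \in gball d.+1 :\: gball d -> (degree x <= 2 + (x == b))%N ->
  (#|[set y | E x y & y \notin gball d.+1]| <= 1 + (x == b))%N.
Proof.
case/setDP=> xb1 xnb deg_x; have := xb1.
rewrite gballS (negbTE xnb) => /existsP [z /andP [zb Ezx]].
have exits_proper : [set y | E x y & y \notin gball d.+1] \proper [set y | E x y].
  apply/properP; split; first by apply/subsetP => y; rewrite !inE => /andP [].
  by exists z; rewrite !inE symE Ezx //= (subsetP (gball_subS d)).
have := proper_card exits_proper; rewrite -/(degree x); lia.
Qed.

Lemma exitsS_le b d :
  (forall x, x \in gball d.+1 :\: gball d -> (degree x <= 2 + (x == b))%N) ->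
  (exits d.+1 <= exits d + (b \in gball d.+1 :\: gball d))%N.
Proof.
move=> deg_new; rewrite /exits (big_setID (gball d)) /= big1 ?add0n; last first.
  move=> x /setIP [_ xb]; apply/eqP; rewrite cards_eq0; apply/eqP/setP => y.
  rewrite !inE gballS negb_or; apply/negP => /and3P [Exy _ /existsPn/(_ x)].
  by rewrite xb Exy.
apply: (@leq_trans (\sum_(x in gball d.+1 :\: gball d) (1 + (x == b)))).
  by apply: leq_sum => x xl; exact: card_exits_new xl (deg_new x xl).
rewrite big_split /= sum1_card leq_add ?card_layer_le_exits //.
case: (boolP (b \in gball d.+1 :\: gball d)) => bl.
  by rewrite (bigD1 b) //= eqxx big1 // => x /andP [_ /negbTE ->].
by rewrite big1 // => x xl; apply/eqP; rewrite eqb0; apply: contraNneq bl => <-.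
Qed.

Section OneException.
Variables (b : V) (r : nat).
Hypothesis deg_gball : {in gball r, forall x, (degree x <= 2 + (x == b))%N}.

Lemma exits_le d : (d <= r)%N -> (exits d <= 2 + (b \in gball d))%N.
Proof.
elim: d => [|d IH] le_dr.
  rewrite /exits gball0 big_set1 in_set1 eq_sym.
  apply: leq_trans (deg_gball (center_gball r)); apply: subset_leq_card.
  by apply/subsetP => y; rewrite !inE => /andP [].
apply: leq_trans (exitsS_le _) _.
  by move=> x /setDP [xd _]; apply: deg_gball; apply: (subsetP (sub_gball le_dr)).
have := IH (ltnW le_dr); have := subsetP (gball_subS d) b.
by rewrite in_setD; case: (b \in gball d); case: (b \in gball d.+1) => //=; lia.
Qed.

Lemma card_gball_le_exception : (#|gball r| <= 1 + 3 * r)%N.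
Proof.
suff card_le d : (d <= r)%N -> (#|gball d| <= 1 + 3 * d)%N by exact: card_le.
elim: d => [|d IH] le_dr; first by rewrite gball0 cards1.
apply: leq_trans (card_gballS_le d) _.
by have := IH (ltnW le_dr); have := exits_le (ltnW le_dr); case: (b \in gball d); lia.
Qed.
End OneException.

Lemma card_gball_le r :
  (forall x, (degree x <= 3)%N) ->
  {in gball r &, forall x y, (2 < degree x)%N -> (2 < degree y)%N -> x = y} ->
  (#|gball r| <= 1 + 3 * r)%N.
Proof.
move=> deg_le3 branch_uniq.
case: (pickP [pred x | (x \in gball r) && (2 < degree x)%N]) => [b /andP [br degb]|none].
  apply: (card_gball_le_exception (b := b)) => x xr.
  case: (eqVneq x b) => [-> | xb]; first exact: deg_le3.
  rewrite addn0 leqNgt; apply: contraNN xb => degx; apply/eqP; exact: branch_uniq.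
apply: (card_gball_le_exception (b := c)) => x xr.
by rewrite (leq_trans _ (leq_addr _ _)) // leqNgt; move: (none x); rewrite /= xr => /negbT.
Qed.

End Balls.

Lemma growth_le_card (T : finType) (e : rel T) r : (growth e r <= #|T|)%N.
Proof. by apply/bigmax_leqP => S _; exact: max_card. Qed.

Lemma growth_le_gball (T : finType) (e : rel T) r n :
  (forall c, #|gball e c r| <= n)%N -> (growth e r <= n)%N.
Proof.
move=> gball_le; apply/bigmax_leqP => S /existsP [F /andP [subF]].
case/existsP=> c /andP [_ dist_c].
have Fe a b : (a, b) \in F -> e a b.
  by move=> ab; move/forallP: subF => /(_ a) /forallP /(_ b) /implyP /(_ ab) /and4P [].
apply: leq_trans (gball_le c); apply: subset_leq_card; apply/subsetP => x xS.
have /existsP [k /existsP [t /andP [pt /eqP <-]]] := implyP (forallP dist_c x) xS.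
apply: (subsetP (sub_gball _ _ (_ : size t <= r)%N)); first by rewrite size_tuple -ltnS.
exact: path_last_gball Fe pt.
Qed.

Lemma connected_in_from (T : finType) (e : rel T) (A : {set T}) (a : T) :
  symmetric e ->
  (forall x, x \in A -> connect [rel x y | [&& x \in A, y \in A & e x y]] a x) ->
  connected_in e A.
Proof.
move=> esym conn_a x y xA yA.
have symA : symmetric [rel x y | [&& x \in A, y \in A & e x y]].
  by move=> u v /=; rewrite esym andbCA.
by apply: connect_trans (conn_a y yA); rewrite (sym_connect_sym symA); exact: conn_a.
Qed.

Section Potential.
Variables (V : finType) (E : rel V) (X : Type) (psi : V -> nat) (own : V -> X).
Variable H : nat.
Hypothesis psi_edge : forall x y, E x y -> (psi y <= (psi x).+1)%N.
Hypothesis own_edge :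
  forall x y, E x y -> (psi x < H)%N -> (psi y < H)%N -> own x = own y.

Lemma psi_gball c d x : symmetric E -> x \in gball E c d -> (psi c <= psi x + d)%N.
Proof.
move=> symE; elim: d x => [|d IH] x; first by rewrite gball0 inE addn0 => /eqP ->.
rewrite gballS => /orP [/IH | /existsP [z /andP [/IH psi_z Ezx]]]; first lia.
by have := psi_edge (_ : E x z); rewrite symE => /(_ Ezx); lia.
Qed.

Lemma own_gball c d x : x \in gball E c d -> (psi c + d < H)%N ->
  own x = own c /\ (psi x <= psi c + d)%N.
Proof.
elim: d x => [|d IH] x; first by rewrite gball0 inE addn0 => /eqP ->.
rewrite gballS addnS => /orP [xd lt_H | /existsP [z /andP [zd Ezx]] lt_H].
  by have [-> psi_x] := IH x xd (ltnW lt_H); split=> //; lia.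
have [own_z psi_z] := IH z zd (ltnW lt_H); have psi_x := psi_edge Ezx.
by split; [rewrite -own_z; apply/esym/own_edge => //; lia | lia].
Qed.

Lemma own_gball_psi0 c r x : symmetric E -> x \in gball E c r -> psi x = 0%N ->
  (r.*2 < H)%N -> own x = own c.
Proof.
move=> symE xr psi_x lt_H.
have := psi_gball symE xr; rewrite psi_x add0n => psi_c.
by have [] := own_gball xr (leq_ltn_trans _ lt_H); rewrite // -addnn leq_add2r.
Qed.
End Potential.

Section Row.
Variable H : nat.
Hypothesis H_gt0 : (0 < H)%N.
Local Notation L := H.*2.

(* Position [p] of a row lies between the attachment points [k * L] and
   [k.+1 * L]; [row_own p] is the nearer one and [row_psi p] the distance to it. *)
Definition row_psi p := let q := (p %% L)%N in if (q < H)%N then q else (L - q)%N.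
Definition row_own p := if (p %% L < H)%N then (p %/ L)%N else (p %/ L).+1.

Lemma row_step p :
  [/\ (row_psi p.+1 <= (row_psi p).+1)%N, (row_psi p <= (row_psi p.+1).+1)%N &
      (row_psi p < H)%N -> (row_psi p.+1 < H)%N -> row_own p = row_own p.+1].
Proof.
have L_gt0 : (0 < L)%N by rewrite double_gt0.
have divmod k q : (q < L)%N -> (k * L + q) %/ L = k /\ (k * L + q) %% L = q.
  by move=> lt_qL; rewrite divnMDl // divn_small // addn0 modnMDl modn_small.
rewrite /row_psi /row_own (divn_eq p L).
move: (p %/ L)%N (p %% L)%N (ltn_mod p L) => k q; rewrite L_gt0 => lt_qL.
have [-> ->] := divmod k q lt_qL.
case: (ltnP q.+1 L) => [lt_q1L | ge_q1L].
  rewrite -addnS; have [-> ->] := divmod k q.+1 lt_q1L.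
  by split; case: ifP; case: ifP; lia.
have -> : (k * L + q).+1 = k.+1 * L + 0 by rewrite mulSn; lia.
have [-> ->] := divmod k.+1 0%N L_gt0.
by split; case: ifP; case: ifP; lia.
Qed.

Lemma row_attach k : row_psi (k * L) = 0%N /\ row_own (k * L) = k.
Proof. by rewrite /row_psi /row_own modnMl mulnK ?double_gt0 // H_gt0. Qed.
End Row.

Lemma leq_card_inj_in (A B : finType) (X : {set A}) (Y : {set B}) (g : A -> B) :
  {in X &, injective g} -> {in X, forall x, g x \in Y} -> (#|X| <= #|Y|)%N.
Proof.
move=> g_inj gXY; rewrite -(card_in_imset g_inj); apply: subset_leq_card.
by apply/subsetP => _ /imsetP [x xX ->]; exact: gXY.
Qed.

Definition row_len (T : finType) H := (#|T| * H.*2)%N.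

(* [inl (u, p)] is the [p]-th vertex of the row of [u]; [inr (u, v, t)] is the
   [t]-th vertex of the path hanging from the row of [u] at position [slot v];
   the paths for non-edges [uv] stay isolated. *)
Definition stretch_vertex (T : finType) H : finType :=
  ((T * 'I_(row_len T H)) + (T * T * 'I_H))%type.

Section Stretch.
Variables (T : finType) (e : rel T) (H : nat).
Local Notation L := H.*2.
Local Notation V := (stretch_vertex T H).

Definition slot (v : T) := (enum_rank v * L)%N.

Definition stretch (x y : V) : bool :=
  match x, y with
  | inl (u, p), inl (u', p') => (u == u') && ((p.+1 == p') || (p'.+1 == p))
  | inl (u, p), inr (u', v, t) | inr (u', v, t), inl (u, p) =>
      [&& u == u', e u' v, t == 0%N :> nat & p == slot v :> nat]
  | inr (u, v, t), inr (u', v', t') =>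
      [&& u == u', v == v' & (t.+1 == t') || (t'.+1 == t)]
      || [&& e u v, u' == v, v' == u, t == H.-1 :> nat & t' == H.-1 :> nat]
  end.

Hypothesis e_sym : symmetric e.
Hypothesis e_irr : irreflexive e.

Lemma stretch_sym : symmetric stretch.
Proof.
move=> [[u p]|[[u v] t]] [[u' p']|[[u' v'] t']] /=.
- by rewrite eq_sym orbC.
- by rewrite eq_sym.
- by rewrite eq_sym.
- congr orb; first by rewrite (eq_sym u) (eq_sym v) orbC.
  by apply/and5P/and5P => -[euv /eqP vu' /eqP uv' tH t'H]; subst; rewrite e_sym.
Qed.

Lemma stretch_irr : irreflexive stretch.
Proof.
move=> [[u p]|[[u v] t]] /=; first by rewrite eqxx /= !gtn_eqF.
rewrite !eqxx /= (gtn_eqF (ltnSn t)) /=.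
by case: (eqVneq u v) => [->|]; rewrite ?e_irr //= andbF.
Qed.

Hypothesis H_gt0 : (0 < H)%N.

Lemma slot_lt v : (slot v < row_len T H)%N.
Proof. by rewrite ltn_pmul2r ?double_gt0. Qed.

Definition slot_ord v : 'I_(row_len T H) := Ordinal (slot_lt v).

Definition branch_set (u : T) : {set V} :=
  [set y : V | match y with
               | inl (u', _) => u' == u
               | inr (u', v, _) => (u' == u) && e u' v
               end].

Lemma minor_of_stretch : minor_of e stretch.
Proof.
exists branch_set; split.
- by move=> u; apply/set0Pn; exists (inl (u, slot_ord u)); rewrite inE.
- move=> u u' neq_uu'; rewrite -setI_eq0; apply/eqP/setP.
  move=> [[w p]|[[w v] t]]; rewrite !inE; apply/negbTE.
    by apply: contra neq_uu' => /andP [/eqP <- /eqP ->].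
  by apply: contra neq_uu' => /andP [/andP [/eqP <- _] /andP [/eqP -> _]].
- move=> u; have row0 : (0 < row_len T H)%N := leq_ltn_trans (leq0n _) (slot_lt u).
  apply: (connected_in_from (a := inl (u, Ordinal row0)) stretch_sym).
  set R := [rel x y | _].
  have row_conn (p : 'I_(row_len T H)) : connect R (inl (u, Ordinal row0)) (inl (u, p)).
    case: p => p; elim: p => [|p IH] lt_p.
      by rewrite (_ : Ordinal lt_p = Ordinal row0) //; apply: val_inj.
    by apply: connect_trans (IH (ltnW lt_p)) (connect1 _); rewrite /R /= !inE !eqxx.
  have path_conn v (t : 'I_H) : e u v -> connect R (inl (u, Ordinal row0)) (inr (u, v, t)).
    move=> euv; case: t => t; elim: t => [|t IH] lt_t.
      apply: connect_trans (row_conn (slot_ord v)) (connect1 _).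
      by rewrite /R /= !inE !eqxx euv.
    by apply: connect_trans (IH (ltnW lt_t)) (connect1 _); rewrite /R /= !inE !eqxx euv.
  move=> [[w p]|[[w v] t]]; rewrite inE /=; first by move/eqP ->.
  by case/andP => /eqP -> /path_conn.
- move=> u v euv; have lt_H1 : (H.-1 < H)%N by rewrite prednK.
  exists (inr (u, v, Ordinal lt_H1)), (inr (v, u, Ordinal lt_H1)).
  by rewrite !inE /= euv e_sym euv !eqxx /= orbT.
Qed.

(* [stretch_psi x] is the distance from [x] to the attachment point named by
   [stretch_own x]; the owner only changes across edges where it reaches [H]. *)
Definition stretch_psi (x : V) : nat :=
  match x with inl (_, p) => row_psi H p | inr (_, _, t) => t.+1 end.

Definition stretch_own (x : V) : T * nat :=
  match x with inl (u, p) => (u, row_own H p) | inr (u, v, _) => (u, enum_rank v : nat) end.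

Lemma stretch_psi_edge x y : stretch x y -> (stretch_psi y <= (stretch_psi x).+1)%N.
Proof.
move: x y => [[u p]|[[u v] t]] [[u' p']|[[u' v'] t']] /=.
- case/andP => _ /orP [/eqP <- | /eqP <-].
    by have [] := row_step H_gt0 p.
  by have [] := row_step H_gt0 p'.
- by case/and4P => _ _ /eqP -> _.
- case/and4P => _ _ /eqP -> /eqP ->.
  by have [-> _] := row_attach H_gt0 (enum_rank v).
- case/orP => [/and3P [_ _ /orP [/eqP <-|/eqP <-]] | /and5P [_ _ _ /eqP -> /eqP ->]] //.
  by rewrite ltnW.
Qed.

Lemma stretch_own_edge x y : stretch x y ->
  (stretch_psi x < H)%N -> (stretch_psi y < H)%N -> stretch_own x = stretch_own y.
Proof.
move: x y => [[u p]|[[u v] t]] [[u' p']|[[u' v'] t']] /=.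
- case/andP => /eqP <- /orP [/eqP <- | /eqP <-] lt_psi lt_psi'.
    by have [_ _ ->] := row_step H_gt0 p.
  by have [_ _ ->] := row_step H_gt0 p'.
- case/and4P => /eqP <- _ _ /eqP -> _ _.
  by have [_ ->] := row_attach H_gt0 (enum_rank v').
- case/and4P => /eqP <- _ _ /eqP -> _ _.
  by have [_ ->] := row_attach H_gt0 (enum_rank v).
- case/orP => [/and3P [/eqP <- /eqP <- _] // | /and5P [_ _ _ /eqP -> _]].
  by rewrite prednK // ltnn.
Qed.

Lemma slot_inj : injective slot.
Proof.
move=> v1 v2 /eqP; rewrite eqn_pmul2r ?double_gt0 // => /eqP eq_rank.
exact/enum_rank_inj/val_inj.
Qed.

(* A row vertex has at most two row neighbours ([Some _]) and, as [slot] is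
   injective, at most one path neighbour ([None]). *)
Definition row_side (p : nat) (y : V) : option bool :=
  if y is inl (_, p') then Some (p < p')%N else None.

Lemma row_side_inj u p : {in [set y | stretch (inl (u, p)) y] &, injective (row_side p)}.
Proof.
move=> [[u1 p1]|[[u1 v1] t1]] [[u2 p2]|[[u2 v2] t2]]; rewrite !inE //=.
- case/andP => /eqP <- lt1 /andP [/eqP <- lt2] [] side.
  congr (inl (_, _)); apply: val_inj => /=; move: lt1 lt2 side.
  by case/orP => /eqP lt1; case/orP => /eqP lt2; lia.
- case/and4P => /eqP <- _ /eqP t1_0 /eqP p_v1.
  case/and4P => /eqP <- _ /eqP t2_0 /eqP p_v2 _.
  have ? := slot_inj (etrans (esym p_v1) p_v2); subst.
  by congr (inr (_, _, _)); apply: val_inj => /=; rewrite t1_0 t2_0.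
Qed.

(* A path vertex has one neighbour towards the row of [u] ([false]) and at most
   one away from it ([true]). *)
Definition path_side (u v : T) (t : nat) (y : V) : bool :=
  if y is inr (u', v', t') then ~~ [&& u' == u, v' == v & (t' < t)%N] else false.

Lemma path_side_inj u v t :
  {in [set y | stretch (inr (u, v, t)) y] &, injective (path_side u v t)}.
Proof.
have lt_H (z : 'I_H) : (z < H)%N by [].
have neq_vu : e u v -> (v == u) = false.
  by move=> euv; apply: contraTF euv => /eqP ->; rewrite e_irr.
move=> [[u1 p1]|[[u1 v1] t1]] [[u2 p2]|[[u2 v2] t2]]; rewrite !inE /=.
- case/and4P => /eqP <- _ _ /eqP p1_v /and4P [/eqP <- _ _ /eqP p2_v] _.
  by congr (inl (_, _)); apply: val_inj; rewrite /= p1_v p2_v.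
- case/and4P => _ /neq_vu vu /eqP t_0 _.
  case/orP => [/and3P [/eqP <- /eqP <- _]|/and5P [_ /eqP -> /eqP -> /eqP t2_H _]];
  rewrite /= ?eqxx ?vu /=; lia.
- move=> + /and4P [_ /neq_vu vu /eqP t_0 _].
  case/orP => [/and3P [/eqP <- /eqP <- _]|/and5P [_ /eqP -> /eqP -> /eqP t1_H _]];
  rewrite /= ?eqxx ?vu /=; lia.
- case: (boolP (e u v)) => [/neq_vu vu|/negbTE not_euv]; last first.
    rewrite /= !orbF => /and3P [/eqP <- /eqP <- t1S] /and3P [/eqP <- /eqP <- t2S].
    rewrite /= !eqxx /= => side.
    congr (inr (_, _, _)); apply: val_inj => /=; move: t1S t2S side.
    by case/orP => /eqP t1S; case/orP => /eqP t2S; lia.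
  case/orP => [/and3P [/eqP <- /eqP <- t1S]|/and5P [_ /eqP -> /eqP -> /eqP t_H /eqP t1_H]];
  (case/orP => [/and3P [/eqP <- /eqP <- t2S]|/and5P [_ /eqP -> /eqP -> /eqP t_H' /eqP t2_H]]);
  rewrite /= ?eqxx ?vu /= => side.
  + congr (inr (_, _, _)); apply: val_inj => /=; move: t1S t2S side.
    by case/orP => /eqP t1S; case/orP => /eqP t2S; lia.
  + by have := lt_H t1; move: t1S side; case/orP => /eqP t1S; lia.
  + by have := lt_H t2; move: t2S side; case/orP => /eqP t2S; lia.
  + by congr (inr (_, _, _)); apply: val_inj; rewrite /= t1_H t2_H.
Qed.

Lemma degree_stretch_le3 x : (degree stretch x <= 3)%N.
Proof.
rewrite /degree; case: x => [[u p]|[[u v] t]].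
  apply: leq_trans (leq_card_in _ _ (row_side_inj (u := u) (p := p))) _.
  by rewrite card_option card_bool.
apply: leq_trans (leq_card_in _ _ (path_side_inj (u := u) (v := v) (t := t))) _.
by rewrite card_bool.
Qed.

Lemma branch_vertex x :
  (2 < degree stretch x)%N -> exists u v, x = inl (u, slot_ord v).
Proof.
case: x => [[u p]|[[u v] t]] deg_x; last first.
  have := leq_card_in _ _ (path_side_inj (u := u) (v := v) (t := t)).
  by rewrite card_bool => deg_le2; have := leq_trans deg_x deg_le2.
case: (pickP (fun v => p == slot v :> nat)) => [v /eqP p_v | no_slot].
  by exists u, v; congr (inl (_, _)); exact: val_inj.
have : (degree stretch (inl (u, p)) <= #|[set Some true; Some false]|)%N.
  apply: leq_card_inj_in (row_side_inj (u := u) (p := p)) _.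
  move=> [[u1 p1]|[[u1 v1] t1]]; rewrite !inE /=.
    by case: (p < p1)%N; rewrite eqxx ?orbT.
  by case/and4P => _ _ _; rewrite no_slot.
by rewrite cards2 => deg_le2; have := leq_trans deg_x deg_le2.
Qed.

Lemma stretch_psi_slot u v : stretch_psi (inl (u, slot_ord v)) = 0%N.
Proof. by have [] := row_attach H_gt0 (enum_rank v). Qed.

Lemma stretch_own_slot u v : stretch_own (inl (u, slot_ord v)) = (u, enum_rank v : nat).
Proof. by have [_ /= ->] := row_attach H_gt0 (enum_rank v). Qed.

Lemma growth_stretch_le r : (r.*2 < H)%N -> (growth stretch r <= 1 + 3 * r)%N.
Proof.
move=> lt_rH; apply: growth_le_gball => c.
apply: (card_gball_le stretch_sym) => [|x y xr yr]; first exact: degree_stretch_le3.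
case/branch_vertex => u [v eq_x]; case/branch_vertex => u' [v' eq_y]; subst x y.
have own_c w z : inl (w, slot_ord z) \in gball stretch c r ->
    stretch_own (inl (w, slot_ord z)) = stretch_own c.
  move=> wz_r; apply: (own_gball_psi0 (@stretch_psi_edge) (@stretch_own_edge)) _ wz_r _ lt_rH.
    exact: stretch_sym.
  exact: stretch_psi_slot.
have := own_c _ _ xr; rewrite -(own_c _ _ yr) !stretch_own_slot.
by case=> <- /val_inj/enum_rank_inj <-.
Qed.
End Stretch.

Lemma card_stretch_vertex (T : finType) H :
  #|stretch_vertex T H| = (3 * #|T| * #|T| * H)%N.
Proof. by rewrite card_sum !card_prod !card_ord /row_len; lia. Qed.

Unset Implicit Arguments.
Local Open Scope ring_scope.

Theorem corollary20 (R : realType) (f : nat -> R)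
  (hsup : superlinear f)
  (hf : forall r : nat, (0 < r)%N -> 1 + 3 * r%:R <= f r)
  (T : finType) (e : rel T) (hG : simple_graph e) :
  exists (T' : finType) (e' : rel T'),
    [/\ simple_graph e', minor_of e e' &
        forall r : nat, (0 < r)%N -> (growth e' r)%:R <= f r].
Proof.
case: hG => e_sym e_irr.
have [N _ f_large] := cvgry_gt hsup (6 * #|T| * #|T|)%N%:R.
pose H := N.*2.+1.
exists (stretch_vertex T H), (stretch (H := H) e); split.
- by split; [exact: stretch_sym | exact: stretch_irr].
- exact: minor_of_stretch.
move=> r r_gt0; case: (ltnP r.*2 H) => [lt_rH | le_Hr].
  apply: le_trans (hf r r_gt0); rewrite -natrM nat1r ler_nat.
  exact: growth_stretch_le.
have le_Nr : (N <= r)%N by move: le_Hr; rewrite /H; lia.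
have := f_large r le_Nr; rewrite /= ltr_pdivlMr ?ltr0n //.
move=> /ltW; apply: le_trans; rewrite -natrM ler_nat.
apply: leq_trans (growth_le_card _ _) _; rewrite card_stretch_vertex.
apply: leq_trans (leq_mul (leqnn _) le_Hr) _.
by rewrite -mul2n mulnA (mulnAC _ _ 2) (mulnAC 3 _ 2).
Qed.
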